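(* In the reset-button collector, let $K_n$ be a random variable with $\mathbb P(K_n=k)=\rho_nq_n^k$ for $k=0,1,2,\dots$ (the number of standard draws before the next reset). Let $(C_{n,r},K_{n,r})_{r\ge1}$ be independent copies of $(C_n,K_n)$, with $C_{n,r}$ independent of $K_{n,r}$ for each $r$, and let $G_n:=\inf\{r\ge1:C_{n,r}\le K_{n,r}\}$. Then $G_n$ is geometric on $\{1,2,\dots\}$ with success probability $s_n:=\mathbb Eq_n^{C_n}$, and \[T_n\stackrel d=\sum_{r=1}^{G_n-1}(K_{n,r}+1)+C_{n,G_n},\] where the sum is empty if $G_n=1$.
   Context: Reset-button collector: fix $n\ge1$. There are standard coupons $1,\dots,n$ and a reset coupon. At each discrete time $t=1,2,\dots$ one coupon is sampled independently: the reset coupon with probability $\rho_n\in(0,1)$, standard coupon $i$ with probability $p_{i,n}>0$, where $\sum_ip_{i,n}=q_n:=1-\rho_n$. Starting from the empty collection, drawn standard coupons are added; a reset empties the collection and collecting continues. $T_n$ is the first time all $n$ standard coupons are present. $C_n$ is the ordinary coupon collector completion time (number of i.i.d. draws until all types seen) with type probabilities $p_{i,n}/q_n$. *)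

From HB Require Import structures.
From mathcomp Require Import all_boot all_order all_algebra.
From mathcomp Require Import all_classical all_reals all_analysis.
Set Implicit Arguments. Unset Strict Implicit. Unset Printing Implicit Defensive.
Import Order.TTheory GRing.Theory Num.Theory.
Local Open Scope classical_set_scope.
Local Open Scope ring_scope.

(* A draw is an element of [option 'I_n]: [None] is the reset coupon,
   [Some i] is standard coupon i. *)
Definition reset_step n (S : {set 'I_n}) (x : option 'I_n) : {set 'I_n} :=
  if x is Some i then i |: S else finset.set0.

Definition reset_collection n (s : seq (option 'I_n)) : {set 'I_n} :=
  foldl (@reset_step n) finset.set0 s.

(* the word s of draws is such that the collection is complete after all of
   s and after no strict prefix of s, i.e. T_n = size s on this word *)
Definition reset_completes_exactly n (s : seq (option 'I_n)) : bool :=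
  (reset_collection s == finset.setT) &&
  all (fun j => reset_collection (take j s) != finset.setT) (iota 0 (size s)).

Definition reset_draw_prob (R : realType) n (rho : R) (p : 'I_n -> R)
  (x : option 'I_n) : R := if x is Some i then p i else rho.

Definition T_law (R : realType) n (rho : R) (p : 'I_n -> R) (t : nat) : R :=
  \sum_(w : t.-tuple (option 'I_n) | reset_completes_exactly w)
     \prod_(x <- w) reset_draw_prob rho p x.

Definition coupon_collection n (s : seq 'I_n) : {set 'I_n} :=
  foldl (fun S i => i |: S) finset.set0 s.

Definition coupon_completes_exactly n (s : seq 'I_n) : bool :=
  (coupon_collection s == finset.setT) &&
  all (fun j => coupon_collection (take j s) != finset.setT) (iota 0 (size s)).

Definition C_law (R : realType) n (q : R) (p : 'I_n -> R) (c : nat) : R :=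
  \sum_(w : c.-tuple 'I_n | coupon_completes_exactly w)
     \prod_(i <- w) (p i / q).

Section indep.
Context d (T : measurableType d) (R : realType) (P : probability T R).
Local Open Scope ereal_scope.

Definition pairs_mutually_independent (C K : nat -> T -> nat) : Prop :=
  forall (s : seq nat) (A : nat -> set (nat * nat)),
    uniq s -> all (fun r => (0 < r)%N) s ->
    P (\bigcap_(r in [set r | r \in s]) ((fun w => (C r w, K r w)) @^-1` A r))
    = \prod_(r <- s) P ((fun w => (C r w, K r w)) @^-1` A r).

Definition indep2 (X Y : T -> nat) : Prop :=
  forall A B : set nat,
    P (X @^-1` A `&` Y @^-1` B) = P (X @^-1` A) * P (Y @^-1` B).
End indep.

(* G_n = inf { r >= 1 : C_r <= K_r }, with None standing for +oo *)
Definition first_success (T : Type) (C K : nat -> T -> nat) (w : T)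
  : option nat :=
  match pselect (exists r, (0 < r)%N && (C r w <= K r w)%N) with
  | left H => Some (ex_minn H)
  | right _ => None
  end.

Definition reset_decomposition (T : Type) (C K : nat -> T -> nat) (w : T)
  : option nat :=
  omap (fun g => (\sum_(1 <= r < g) (K r w).+1 + C g w)%N)
       (first_success C K w).

(* Both sides satisfy the same renewal equation
     P(X = t) = P(C = t) q^t + sum_(j < t) rho q^j P(C > j) P(X = t - j - 1),
   which determines the law by strong induction on t.  For the decomposition
   this is the first-round analysis: either C_1 = t <= K_1, or K_1 = j < C_1 and
   the rounds after the first form an independent copy of the whole process;
   rounds succeed independently with probability P(C <= K) = E[q^C], whence
   the geometric law of G_n.  For T_n it comes from splitting a word of draws
   at its first reset: before it stands a word of j standard draws that does not
   complete the collection, of weight q^j P(C > j). *)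

From HB Require Import structures.
From mathcomp Require Import all_boot all_order all_algebra.
From mathcomp Require Import all_classical all_reals all_analysis.
From mathcomp Require Import ring lra zify.
Import Order.TTheory GRing.Theory Num.Theory.
Local Open Scope classical_set_scope.
Local Open Scope ring_scope.
Set Implicit Arguments. Unset Strict Implicit. Unset Printing Implicit Defensive.

Section WordMass.
Variables (R : pzSemiRingType) (X : finType) (f : X -> R).

Lemma sum_tupleS t (F : seq X -> R) :
  \sum_(w : t.+1.-tuple X) F w = \sum_(x : X) \sum_(w : t.-tuple X) F (x :: w).
Proof.
rewrite pair_big /= (reindex (fun xw : X * t.-tuple X => [tuple of xw.1 :: xw.2])) //.
exists (fun w : t.+1.-tuple X => (thead w, [tuple of behead w])).
  by move=> [x w] _; congr pair; apply: val_inj.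
by move=> w _; apply: val_inj; rewrite /= [in RHS](tuple_eta w).
Qed.

Definition word_mass (G : pred (seq X)) t :=
  \sum_(w : t.-tuple X | G w) \prod_(x <- w) f x.

Lemma eq_word_mass G G' : G =1 G' -> word_mass G =1 word_mass G'.
Proof. by move=> eqG t; apply: eq_bigl => w; exact: eqG. Qed.

Lemma word_mass0 G : word_mass G 0 = (G [::])%:R.
Proof.
rewrite /word_mass big_mkcond (big_pred1 [tuple]) => [|w] /=.
  by case: (G [::]); rewrite ?big_nil.
by apply/esym/eqP; exact: tuple0.
Qed.

Lemma word_massS G t :
  word_mass G t.+1 = \sum_x f x * word_mass (fun w => G (x :: w)) t.
Proof.
rewrite /word_mass big_mkcond.
rewrite (@sum_tupleS t (fun w => if G w then \prod_(x <- w) f x else 0)).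
apply: eq_bigr => x _.
rewrite mulr_sumr [RHS]big_mkcond; apply: eq_bigr => w _ /=.
by case: ifP; rewrite ?big_cons ?mulr0.
Qed.

End WordMass.

Section CompletesExactly.
Variables (St : eqType) (X : Type) (step : St -> X -> St) (goal : St).

Definition completes_exactly S (w : seq X) : bool :=
  (foldl step S w == goal) &&
  all (fun j => foldl step S (take j w) != goal) (iota 0 (size w)).

Lemma completes_exactly_nil S : completes_exactly S [::] = (S == goal).
Proof. by rewrite /completes_exactly andbT. Qed.

Lemma completes_exactly_cons S x w :
  completes_exactly S (x :: w) = (S != goal) && completes_exactly (step S x) w.
Proof.
rewrite /completes_exactly /= [iota 1 _](iotaDl 1 0) all_map andbCA.
by congr (_ && (_ && _)); apply: eq_all => j; rewrite /= add1n.
Qed.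

End CompletesExactly.

Definition coupon_step n (S : {set 'I_n}) (i : 'I_n) := i |: S.

Section CouponMass.
Variables (R : comPzSemiRingType) (n : nat) (p : 'I_n -> R).
Local Notation q := (\sum_i p i).

Definition coupon_mass S :=
  word_mass p (completes_exactly (@coupon_step n) finset.setT S).

Definition incomplete_mass S :=
  word_mass p (fun w => foldl (@coupon_step n) S w != finset.setT).

Lemma coupon_mass0 S : coupon_mass S 0 = (S == finset.setT)%:R.
Proof. by rewrite /coupon_mass word_mass0 completes_exactly_nil. Qed.

Lemma coupon_massS S t : S != finset.setT ->
  coupon_mass S t.+1 = \sum_i p i * coupon_mass (i |: S) t.
Proof.
move=> nS; rewrite /coupon_mass word_massS.
apply: eq_bigr => i _; congr (_ * _); apply: eq_word_mass => w.
by rewrite completes_exactly_cons nS.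
Qed.

Lemma coupon_mass_full t : coupon_mass finset.setT t.+1 = 0.
Proof.
rewrite /coupon_mass /word_mass big_pred0 // => -[[|i w] //= _].
by rewrite completes_exactly_cons eqxx.
Qed.

Lemma incomplete_mass0 S : incomplete_mass S 0 = (S != finset.setT)%:R.
Proof. exact: word_mass0. Qed.

Lemma incomplete_massS S k :
  incomplete_mass S k.+1 = \sum_i p i * incomplete_mass (i |: S) k.
Proof. exact: word_massS. Qed.

Lemma foldl_coupon_step_full (w : seq 'I_n) :
  foldl (@coupon_step n) finset.setT w = finset.setT.
Proof. by elim: w => //= i w; rewrite /coupon_step finset.setUT. Qed.

Lemma incomplete_mass_full k : incomplete_mass finset.setT k = 0.
Proof.
rewrite /incomplete_mass /word_mass big_pred0 // => w.
by rewrite foldl_coupon_step_full eqxx.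
Qed.

(* A word of length k either never completes the collection, or completes it
   first after c draws and then continues arbitrarily. *)
Lemma incomplete_mass_add_coupon k S :
  incomplete_mass S k + \sum_(c < k.+1) coupon_mass S c * q ^+ (k - c) = q ^+ k.
Proof.
elim: k S => [|k IHk] S.
  rewrite big_ord1 incomplete_mass0 coupon_mass0 mulr1 expr0.
  by case: (S == _); rewrite /= ?add0r ?addr0.
rewrite big_ord_recl coupon_mass0 subn0.
have [->|nS] := eqVneq S finset.setT.
  rewrite incomplete_mass_full add0r mul1r [X in _ + X]big1 ?addr0 // => c _.
  by rewrite coupon_mass_full mul0r.
rewrite mul0r add0r incomplete_massS exprS mulr_suml.
under [RHS]eq_bigr => i _ do rewrite -(IHk (i |: S)) mulrDr.
rewrite big_split /=; congr (_ + _).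
under eq_bigr => c _ do rewrite /bump /= subSS coupon_massS // mulr_suml.
rewrite exchange_big; apply: eq_bigr => i _; rewrite mulr_sumr.
by apply: eq_bigr => c _; rewrite mulrA.
Qed.

End CouponMass.

Lemma sum_option (R : nmodType) (I : finType) (F : option I -> R) :
  \sum_(x : option I) F x = F None + \sum_(i : I) F (Some i).
Proof.
rewrite (bigD1 None) //=; congr (_ + _).
rewrite (reindex_omap Some id) => [|[]] //=.
by apply: eq_bigl => i; rewrite eqxx.
Qed.

Section ResetMass.
Variables (R : realType) (n : nat) (rho : R) (p : 'I_n -> R).

Definition reset_mass S :=
  word_mass (reset_draw_prob rho p) (completes_exactly (@reset_step n) finset.setT S).

Lemma T_lawE t : T_law rho p t = reset_mass finset.set0 t.
Proof. by []. Qed.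

Lemma reset_mass0 S : reset_mass S 0 = (S == finset.setT)%:R.
Proof. by rewrite /reset_mass word_mass0 completes_exactly_nil. Qed.

Lemma reset_massS S t : S != finset.setT ->
  reset_mass S t.+1 =
  rho * reset_mass finset.set0 t + \sum_i p i * reset_mass (i |: S) t.
Proof.
move=> nS; rewrite /reset_mass word_massS sum_option.
by congr (_ + _); [|apply: eq_bigr => i _]; congr (_ * _);
  apply: eq_word_mass => w; rewrite completes_exactly_cons nS.
Qed.

Lemma reset_mass_full t : reset_mass finset.setT t.+1 = 0.
Proof.
rewrite /reset_mass /word_mass big_pred0 // => -[[|x w] //= _].
by rewrite completes_exactly_cons eqxx.
Qed.

(* Split a completing word at its first reset, if any. *)
Lemma reset_mass_first_reset t S :
  reset_mass S t = coupon_mass p S t +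
    \sum_(k < t) rho * incomplete_mass p S k * reset_mass finset.set0 (t - k.+1).
Proof.
elim: t S => [|t IHt] S.
  by rewrite reset_mass0 coupon_mass0 big_ord0 addr0.
have [->|nS] := eqVneq S finset.setT.
  rewrite reset_mass_full coupon_mass_full add0r big1 // => k _.
  by rewrite incomplete_mass_full mulr0 mul0r.
rewrite reset_massS // coupon_massS // big_ord_recl incomplete_mass0 nS mulr1.
rewrite subn1 /=.
under eq_bigr => i _ do rewrite IHt mulrDr.
rewrite big_split /= addrCA; congr (_ + (_ + _)).
under eq_bigr do rewrite mulr_sumr.
rewrite exchange_big; apply: eq_bigr => k _.
rewrite /bump /= add1n subSS incomplete_massS (@mulr_sumr _ _ _ _ _ rho) mulr_suml.
by apply: eq_bigr => i _; rewrite !mulrA (mulrC (p i)).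
Qed.

End ResetMass.

Section CouponLaw.
Variables (R : realType) (n : nat) (p : 'I_n -> R).
Local Notation q := (\sum_i p i).
Hypothesis q_neq0 : q != 0.

Lemma C_law_coupon_mass c : C_law q p c = coupon_mass p finset.set0 c / q ^+ c.
Proof.
rewrite /C_law /coupon_mass /word_mass mulr_suml; apply: eq_bigr => w _.
by rewrite big_split /= big_const_seq count_predT size_tuple iter_mulr_1 exprVn.
Qed.

Lemma incomplete_mass_C_law k :
  incomplete_mass p finset.set0 k = q ^+ k * (1 - \sum_(c < k.+1) C_law q p c).
Proof.
rewrite mulrBr mulr1 mulr_sumr.
have -> : \sum_(c < k.+1) q ^+ k * C_law q p c =
          \sum_(c < k.+1) coupon_mass p finset.set0 c * q ^+ (k - c).
  apply: eq_bigr => c _; have ck : (c <= k)%N by rewrite -ltnS.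
  rewrite C_law_coupon_mass -{1}(subnKC ck) exprD.
  by field; rewrite expf_neq0.
by rewrite -(incomplete_mass_add_coupon p k finset.set0) addrK.
Qed.

End CouponLaw.

Lemma T_law_renewal (R : realType) n (rho : R) (p : 'I_n -> R) t :
  \sum_i p i = 1 - rho -> rho != 1 ->
  T_law rho p t = C_law (1 - rho) p t * (1 - rho) ^+ t +
    \sum_(j < t) rho * (1 - rho) ^+ j *
      (1 - \sum_(c < j.+1) C_law (1 - rho) p c) * T_law rho p (t - j.+1).
Proof.
move=> hp rho_neq1; have q_neq0 : \sum_i p i != 0 by rewrite hp subr_eq0 eq_sym.
rewrite -hp T_lawE reset_mass_first_reset C_law_coupon_mass // divfK ?expf_neq0 //.
by congr (_ + _); apply: eq_bigr => j _; rewrite incomplete_mass_C_law // mulrA.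
Qed.

Section FirstSuccess.
Variables (T : Type) (c k : nat -> T -> nat) (w : T).

Lemma first_success_SomeP g : first_success c k w = Some g <->
  [/\ (0 < g)%N, (c g w <= k g w)%N &
      forall r, (0 < r)%N -> (r < g)%N -> (k r w < c r w)%N].
Proof.
rewrite /first_success; case: pselect => [ex|nex]; last first.
  by split=> // -[g0 cg _]; case: nex; exists g; rewrite g0.
case: ex_minnP => m /andP[m0 cm] min_m; split=> [[<-]|[g0 cg lt_g]].
  split=> // r r0 rm; rewrite ltnNge; apply/negP => cr.
  by have := min_m r; rewrite r0 cr leqNgt rm => /(_ isT).
congr Some; apply/eqP; rewrite eqn_leq min_m ?g0 //= leqNgt; apply/negP => mg.
by have := lt_g m m0 mg; rewrite ltnNge cm.
Qed.

Lemma first_success_NoneP :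
  first_success c k w = None <-> forall r, (0 < r)%N -> (k r w < c r w)%N.
Proof.
rewrite /first_success; case: pselect => [ex|nex].
  have [r /andP[r0 cr]] := ex.
  by split=> // /(_ r r0); rewrite ltnNge cr.
split=> [_ r r0|//]; rewrite ltnNge; apply/negP => cr.
by case: nex; exists r; rewrite r0.
Qed.

End FirstSuccess.

Lemma first_successS (T : Type) (c k : nat -> T -> nat) w :
  first_success c k w =
  if (c 1 w <= k 1 w)%N then Some 1%N
  else omap succn (first_success (fun r => c r.+1) (fun r => k r.+1) w).
Proof.
case: ifP => c1.
  by apply/first_success_SomeP; split=> // -[|r].
case E: (first_success (fun r => c r.+1) _ w) => [g|] /=.
  move/first_success_SomeP: E => [g0 cg lt_g].
  apply/first_success_SomeP; split=> // -[|[|r]] // _ rg.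
    by rewrite ltnNge c1.
  exact: lt_g.
move/first_success_NoneP: E => lt_all.
apply/first_success_NoneP => -[|[|r]] // _; first by rewrite ltnNge c1.
exact: lt_all.
Qed.

Lemma reset_decompositionS (T : Type) (c k : nat -> T -> nat) w :
  reset_decomposition c k w =
  if (c 1 w <= k 1 w)%N then Some (c 1 w)
  else omap (addn (k 1 w).+1)
         (reset_decomposition (fun r => c r.+1) (fun r => k r.+1) w).
Proof.
rewrite /reset_decomposition first_successS; case: ifP => c1 /=.
  by rewrite big_geq.
case E: (first_success (fun r => c r.+1) _ w) => [g|] //=.
move/first_success_SomeP: E => [g0 _ _].
by congr Some; rewrite big_ltn ?ltnS // big_add1 addnA.
Qed.

Definition round_success := [set x : nat * nat | (x.1 <= x.2)%N].
Definition round_completes_at t := [set x : nat * nat | x.1 = t /\ (t <= x.2)%N].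
Definition round_resets_at j := [set x : nat * nat | x.2 = j /\ (j < x.1)%N].

Section ResetRounds.
Variables (R : realType) (d : measure_display) (T : measurableType d)
  (P : probability T R) (C K : nat -> T -> nat).
Hypotheses (mC : forall r, measurable_fun setT (C r))
  (mK : forall r, measurable_fun setT (K r)).

Lemma measurable_preimage (X : T -> nat) (A : set nat) :
  measurable_fun setT X -> measurable (X @^-1` A).
Proof. by move=> mX; rewrite -[X @^-1` A]setTI; exact: mX. Qed.

Lemma probability_preimage_lt (X : T -> nat) t : measurable_fun setT X ->
  P (X @^-1` [set x | (x < t)%N]) = (\sum_(k < t) P (X @^-1` [set (k : nat)]))%E.
Proof.
move=> mX; have mXk (A : set nat) : measurable (X @^-1` A) by exact: measurable_preimage.
have -> : X @^-1` [set x | (x < t)%N] = \bigcup_(k < t) X @^-1` [set k].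
  apply/seteqP; split=> w /=; first by exists (X w).
  by case=> k /= kt ->.
rewrite bigcup_mkord (@measure_bigsetU _ _ _ P (fun k => X @^-1` [set k])) //.
by move=> i j _ _ [w [/= <- <-]].
Qed.

Definition round r w := (C r w, K r w).

Lemma measurable_round r A : measurable (round r @^-1` A).
Proof.
have -> : round r @^-1` A =
    \bigcup_c (C r @^-1` [set c] `&` K r @^-1` [set k | A (c, k)]).
  apply/seteqP; split=> w /=; first by exists (C r w).
  by case=> c _ [/= <-].
by apply: bigcupT_measurable => c; apply: measurableI; exact: measurable_preimage.
Qed.

(* Events determined by the rounds 1, ..., m; the later rounds are independent
   of them. *)
Definition cylinder m : set (set T) :=
  [set Z | exists A : nat -> set (nat * nat),
     Z = \bigcap_(r in [set r | r \in iota 1 m]) round r @^-1` A r].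

Lemma cylinder0 : cylinder 0 setT.
Proof.
by exists (fun=> setT); apply/seteqP; split=> w //= _ r.
Qed.

Lemma measurable_cylinder m Z : cylinder m Z -> measurable Z.
Proof.
move=> [A ->]; rewrite bigcap_mkcond; apply: bigcapT_measurable => r.
by case: ifP => _; [exact: measurable_round | exact: measurableT].
Qed.

Lemma bigcap_round_iotaS m A B :
  \bigcap_(r in [set r | r \in iota 1 m.+1])
     round r @^-1` (if r == m.+1 then B else A r) =
  (\bigcap_(r in [set r | r \in iota 1 m]) round r @^-1` A r) `&`
     round m.+1 @^-1` B.
Proof.
have memS r : (r \in iota 1 m.+1) = (r \in iota 1 m) || (r == m.+1).
  by rewrite !mem_iota; lia.
have iota_neq r : r \in iota 1 m -> r != m.+1 by rewrite mem_iota; lia.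
apply/seteqP; split=> w.
  move=> ABw; split=> [r rm|].
    by have := ABw r; rewrite /= memS rm (negbTE (iota_neq r rm)); apply.
  by have := ABw m.+1; rewrite /= memS eqxx orbT; apply.
move=> [Aw Bw] r /=; rewrite memS; case: eqP => [-> //|_]; rewrite orbF => rm.
exact: Aw.
Qed.

Lemma cylinderS m Z B : cylinder m Z -> cylinder m.+1 (Z `&` round m.+1 @^-1` B).
Proof.
move=> [A ->]; exists (fun r => if r == m.+1 then B else A r).
by rewrite bigcap_round_iotaS.
Qed.

Hypothesis indep : pairs_mutually_independent P C K.

Lemma indep_cylinder_round m Z B : cylinder m Z ->
  P (Z `&` round m.+1 @^-1` B) = (P Z * P (round m.+1 @^-1` B))%E.
Proof.
have iota_pos k : all (fun r => (0 < r)%N) (iota 1 k).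
  by apply/allP => r; rewrite mem_iota => /andP[].
move=> [A ->]; rewrite -bigcap_round_iotaS.
rewrite indep ?iota_uniq // indep ?iota_uniq //.
rewrite -[X in iota _ X]addn1 iotaD big_cat big_seq1 add1n eqxx; congr (_ * _)%E.
by apply: eq_big_seq => r; rewrite mem_iota add1n => /andP[_ /ltn_eqF ->].
Qed.

Variables (n : nat) (rho : R) (p : 'I_n -> R).
Local Notation q := (1 - rho).
Hypotheses
  (lawC : forall r c, (0 < r)%N -> P (C r @^-1` [set c]) = (C_law q p c)%:E)
  (lawK : forall r k, (0 < r)%N -> P (K r @^-1` [set k]) = (rho * q ^+ k)%:E)
  (indepCK : forall r, (0 < r)%N -> indep2 P (C r) (K r)).

Lemma probability_K_ge r t : (0 < r)%N ->
  P (K r @^-1` [set k | (t <= k)%N]) = (q ^+ t)%:E.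
Proof.
move=> r0; have -> : K r @^-1` [set k | (t <= k)%N] =
    ~` (K r @^-1` [set k | (k < t)%N]).
  by apply/seteqP; split=> w /=; case: leqP.
rewrite probability_setC ?probability_preimage_lt //; last exact: measurable_preimage.
under eq_bigr do rewrite lawK //.
have geo := subrX1 q t; rewrite addrAC subrr add0r mulNr mulr_sumr in geo.
by rewrite sumEFin -EFinB; congr EFin; lra.
Qed.

Lemma probability_C_le r k : (0 < r)%N ->
  P (C r @^-1` [set c | (c <= k)%N]) = (\sum_(c < k.+1) C_law q p c)%:E.
Proof.
move=> r0; rewrite (probability_preimage_lt k.+1) // -sumEFin.
by apply: eq_bigr => c _; rewrite lawC.
Qed.

Lemma probability_C_gt r k : (0 < r)%N ->
  P (C r @^-1` [set c | (k < c)%N]) = (1 - \sum_(c < k.+1) C_law q p c)%:E.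
Proof.
move=> r0; have -> : C r @^-1` [set c | (k < c)%N] =
    ~` (C r @^-1` [set c | (c <= k)%N]).
  by apply/seteqP; split=> w /=; case: leqP.
by rewrite probability_setC ?probability_C_le //; exact: measurable_preimage.
Qed.

Lemma probability_completes_at r t : (0 < r)%N ->
  P (round r @^-1` round_completes_at t) = (C_law q p t * q ^+ t)%:E.
Proof.
move=> r0; have -> : round r @^-1` round_completes_at t =
    C r @^-1` [set t] `&` K r @^-1` [set k | (t <= k)%N] by [].
by rewrite indepCK // lawC // probability_K_ge.
Qed.

Lemma probability_resets_at r j : (0 < r)%N ->
  P (round r @^-1` round_resets_at j) =
  (rho * q ^+ j * (1 - \sum_(c < j.+1) C_law q p c))%:E.
Proof.
move=> r0; have -> : round r @^-1` round_resets_at j =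
    K r @^-1` [set j] `&` C r @^-1` [set c | (j < c)%N] by [].
by rewrite setIC indepCK // lawK // probability_C_gt // -EFinM mulrC.
Qed.

Lemma probability_success_series r : (0 < r)%N ->
  P (round r @^-1` round_success) =
  (\sum_(0 <= c <oo) (C_law q p c * q ^+ c)%:E)%E.
Proof.
move=> r0; have -> : round r @^-1` round_success =
    \bigcup_c round r @^-1` round_completes_at c.
  by apply/seteqP; split=> w /=; [exists (C r w) | case=> c _ [/= <-]].
rewrite measure_bigcup; last 2 first.
- by move=> c _; exact: measurable_round.
- by move=> i j _ _ [w [[/= <- _] [/= <- _]]].
rewrite (@eq_eseriesl _ _ xpredT) => [|c]; last by rewrite in_setT.
by apply: eq_eseriesr => c _; exact: probability_completes_at.
Qed.

Hypothesis rho_in01 : 0 < rho < 1.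

Lemma expectation_series :
  ('E_P[fun w => (q ^+ C 1 w)%R] =
   \sum_(0 <= c <oo) (C_law q p c * q ^+ c)%:E)%E.
Proof.
have q_ge0 : 0 <= q by rewrite subr_ge0; case/andP: rho_in01 => _ /ltW.
rewrite unlock.
have -> : [set: T] = \bigcup_c C 1 @^-1` [set c].
  by apply/seteqP; split=> w // _; exists (C 1 w).
rewrite ge0_integral_bigcup; first last.
- by move=> i j _ _ [w [/= <- <-]].
- by move=> w _; rewrite lee_fin exprn_ge0.
- move=> _ Y _; apply: measurableI.
    by apply: bigcupT_measurable => c; exact: measurable_preimage.
  exact: (measurable_preimage [set c | Y (q ^+ c)%:E]).
- by move=> c; exact: measurable_preimage.
apply: eq_eseriesr => c _.
rewrite (eq_integral (fun _ => (q ^+ c)%:E)) => [|w]; last by rewrite inE => ->.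
rewrite integral_cst; last exact: measurable_preimage.
by rewrite EFinM muleC; congr (_ * _)%E; exact: lawC.
Qed.

Definition success_at m g :=
  [set w | first_success (fun r => C (m + r)%N) (fun r => K (m + r)%N) w = Some g].

Definition decomposition_at m t :=
  [set w | reset_decomposition (fun r => C (m + r)%N) (fun r => K (m + r)%N) w
           = Some t].

Lemma shift_succ (F : nat -> T -> nat) m :
  (fun r => F (m + r.+1)%N) = (fun r => F (m.+1 + r)%N).
Proof. by apply: funext => r; rewrite addnS. Qed.

Lemma first_success_shift m w :
  first_success (fun r => C (m + r)%N) (fun r => K (m + r)%N) w =
  if (C m.+1 w <= K m.+1 w)%N then Some 1%N
  else omap succn
    (first_success (fun r => C (m.+1 + r)%N) (fun r => K (m.+1 + r)%N) w).
Proof. by rewrite first_successS /= !addn1 !shift_succ. Qed.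

Lemma reset_decomposition_shift m w :
  reset_decomposition (fun r => C (m + r)%N) (fun r => K (m + r)%N) w =
  if (C m.+1 w <= K m.+1 w)%N then Some (C m.+1 w)
  else omap (addn (K m.+1 w).+1)
    (reset_decomposition (fun r => C (m.+1 + r)%N) (fun r => K (m.+1 + r)%N) w).
Proof. by rewrite reset_decompositionS /= !addn1 !shift_succ. Qed.

Lemma success_at1 m : success_at m 1 = round m.+1 @^-1` round_success.
Proof.
apply/seteqP; split=> w; rewrite /success_at /= (first_success_shift m).
  case: ifP => // _; case E: first_success => [g|] //= [g0].
  by move/first_success_SomeP: E; rewrite g0 => -[].
by move=> ->.
Qed.

Lemma success_atSS m g :
  success_at m g.+2 = round m.+1 @^-1` (~` round_success) `&` success_at m.+1 g.+1.
Proof.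
apply/seteqP; split=> w; rewrite /success_at /= (first_success_shift m).
  case: ifP => // cK; case: first_success => //= _ [->].
  by rewrite /round_success /= cK.
by move=> [/negP/negbTE -> ->].
Qed.

Lemma decomposition_atE m t :
  decomposition_at m t =
  round m.+1 @^-1` round_completes_at t `|`
  \bigcup_(j < t)
     (round m.+1 @^-1` round_resets_at j `&` decomposition_at m.+1 (t - j.+1)).
Proof.
apply/seteqP; split=> w;
  rewrite /decomposition_at /= (reset_decomposition_shift m).
  case: ifP => [cK [<-]|]; first by left.
  rewrite leqNgt => /negbFE Kc.
  case E: (reset_decomposition _ _ w) => [x|] //= [<-]; right.
  exists (K m.+1 w); first by rewrite /= addSn ltnS leq_addr.
  by split; [split | rewrite /= addKn].
case=> [[/= -> ->] // | [j /= jt [[/= Kj Kc] ->]]].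
by subst j; rewrite leqNgt Kc /= subnKC.
Qed.

Lemma measurable_decomposition_at t m : measurable (decomposition_at m t).
Proof.
elim/ltn_ind: t m => t IH m; rewrite decomposition_atE.
apply: measurableU; first exact: measurable_round.
apply: bigcup_measurable => j /= jt; apply: measurableI; first exact: measurable_round.
by apply: IH; rewrite subnSK // leq_subr.
Qed.

Lemma probability_success r : (0 < r)%N ->
  P (round r @^-1` round_success) = ('E_P[fun w => (q ^+ C 1 w)%R])%E.
Proof. by move=> r0; rewrite probability_success_series // expectation_series. Qed.

Local Notation s := ('E_P[fun w => (q ^+ C 1 w)%R])%E.

Lemma probability_cylinder_success_at g m Z : cylinder m Z ->
  P (Z `&` success_at m g.+1) = (P Z * ((1 - s) ^+ g * s))%E.
Proof.
elim: g m Z => [|g IHg] m Z cZ.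
  rewrite success_at1 indep_cylinder_round // probability_success //.
  by rewrite expe0 mul1e.
rewrite success_atSS setIA IHg; last exact: cylinderS.
rewrite indep_cylinder_round // -preimage_setC probability_setC; last first.
  exact: measurable_round.
by rewrite probability_success // expeS !muleA.
Qed.

Hypothesis sum_p : \sum_i p i = q.

(* Conditioning on a cylinder lets the induction absorb the first round into
   the conditioning event. *)
Lemma probability_cylinder_decomposition_at t m Z : cylinder m Z ->
  P (Z `&` decomposition_at m t) = (P Z * (T_law rho p t)%:E)%E.
Proof.
elim/ltn_ind: t m Z => t IH m Z cZ.
have mZ := measurable_cylinder cZ.
have [z Pz] : exists z, P Z = z%:E.
  by exists (fine (P Z)); rewrite fineK //; exact: fin_num_measure.
pose Y j := Z `&` (round m.+1 @^-1` round_resets_at j `&`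
                   decomposition_at m.+1 (t - j.+1)).
have mY j : measurable (Y j).
  apply: measurableI => //; apply: measurableI; first exact: measurable_round.
  exact: measurable_decomposition_at.
rewrite decomposition_atE setIUr setI_bigcupr measureU; first last.
- apply/seteqP; split=> // w [[_ [/= Ct tK]] [j /= jt [_ [[/= Kj jC] _]]]].
  by move: jC; rewrite -Kj Ct ltnNge tK.
- by apply: bigcup_measurable => j _; exact: mY.
- by apply: measurableI => //; exact: measurable_round.
rewrite /= indep_cylinder_round // probability_completes_at // bigcup_mkord.
rewrite (@measure_bigsetU _ _ _ P Y) //; last first.
  by move=> i j _ _ [w [[_ [[/= <- _] _]] [_ [[/= <- _] _]]]].
under eq_bigr => j _.
  rewrite /Y setIA /= IH; [|by rewrite subnSK // leq_subr | exact: cylinderS].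
  rewrite indep_cylinder_round // probability_resets_at // Pz -!EFinM.
  over.
rewrite Pz sumEFin -!EFinM -EFinD (T_law_renewal t sum_p); last first.
  by case/andP: rho_in01 => _ /lt_eqF ->.
rewrite mulrDr mulr_sumr; congr (_ + _)%:E.
by apply: eq_bigr => j _; rewrite !mulrA.
Qed.

Lemma probability_first_success g :
  P [set w | first_success C K w = Some g.+1] = ((1 - s) ^+ g * s)%E.
Proof.
have := probability_cylinder_success_at g cylinder0.
by rewrite setTI probability_setT mul1e.
Qed.

Lemma probability_reset_decomposition t :
  P [set w | reset_decomposition C K w = Some t] = (T_law rho p t)%:E.
Proof.
have := probability_cylinder_decomposition_at t cylinder0.
by rewrite setTI probability_setT mul1e.
Qed.

End ResetRounds.

Theorem mainTheorem12 (R : realType) (n : nat) (rho : R) (p : 'I_n -> R)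
  (d : measure_display) (T : measurableType d) (P : probability T R)
  (C K : nat -> T -> nat) :
  (0 < n)%N ->
  0 < rho < 1 ->
  (forall i, 0 < p i) ->
  \sum_(i < n) p i = 1 - rho ->
  (forall r, measurable_fun setT (C r)) ->
  (forall r, measurable_fun setT (K r)) ->
  (forall r c, (0 < r)%N -> P (C r @^-1` [set c]) = (C_law (1 - rho) p c)%:E) ->
  (forall r k, (0 < r)%N -> P (K r @^-1` [set k]) = (rho * (1 - rho) ^+ k)%:E) ->
  pairs_mutually_independent P C K ->
  (forall r, (0 < r)%N -> indep2 P (C r) (K r)) ->
  let s := ('E_P[fun w => ((1 - rho) ^+ C 1%N w)%R])%E in
  (forall g, (0 < g)%N ->
     P [set w | first_success C K w = Some g] = ((1 - s) ^+ g.-1 * s)%E) /\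
  (forall t, P [set w | reset_decomposition C K w = Some t]
             = (T_law rho p t)%:E).
Proof.
move=> _ rho01 _ sum_p mC mK lawC lawK indep indepCK s; split.
- case=> // g _.
  exact: (probability_first_success mC mK indep lawC lawK indepCK rho01 g).
- move=> t.
  exact: (probability_reset_decomposition
            mC mK indep lawC lawK indepCK rho01 sum_p t).
Qed.
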